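(* Let $(x_m)_{m\ge0}$, $(y_n)_{n\ge1}$, $(z_m)_{m\ge0}$ be elements of a commutative ring, and define an array $(a_{n,m})_{n,m\ge0}$ by $a_{0,m}=x_m$ for all $m\ge0$ and $$a_{n,m}=z_m\,a_{n-1,m+1}+y_n\,a_{n-1,m}\qquad(n\ge1,\ m\ge 0).$$ Then for all $n,m\ge0$, $$a_{n,m}=\sum_{k=0}^n x_{m+k}\,(z_mz_{m+1}\cdots z_{m+k-1})\,e_{n-k}(y_1,y_2,\ldots,y_n),$$ where $e_i$ denotes the $i$-th elementary symmetric polynomial (with $e_0=1$) and the empty product equals $1$. *)

From HB Require Import structures.
From mathcomp Require Import all_boot all_order all_algebra.
Set Implicit Arguments. Unset Strict Implicit. Unset Printing Implicit Defensive.
Import GRing.Theory.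
Local Open Scope ring_scope.

(* elem_sym n i y = e_i(y 1, y 2, ..., y n): the i-th elementary symmetric
   polynomial evaluated at y_1,...,y_n, i.e. the sum over all i-element
   subsets I of {1,...,n} of prod_{j in I} y_j.  (e_0 = 1 = empty product.) *)
Definition elem_sym (R : comPzRingType) (n i : nat) (y : nat -> R) : R :=
  \sum_(I : {set 'I_n} | #|I| == i) \prod_(j in I) y (j.+1)%N.

From HB Require Import structures.
From mathcomp Require Import all_boot all_order all_algebra.
Import GRing.Theory.
Local Open Scope ring_scope.

(* The array a is uniquely determined by its first row a_{0,.} = x and the
   recursion a_{n+1,m} = z_m a_{n,m+1} + y_{n+1} a_{n,m}.  It therefore
   suffices to show that the proposed closed form

     c_{n,m} = sum_{k=0}^n x_{m+k} (z_m ... z_{m+k-1}) e_{n-k}(y_1,...,y_n)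

   satisfies the same first row and the same recursion.  The recursion for c
   follows from Pascal's rule for elementary symmetric polynomials,

     e_{i+1}(y_1,...,y_{n+1}) = e_{i+1}(y_1,...,y_n) + y_{n+1} e_i(y_1,...,y_n),

   together with e_0 = 1, e_i = 0 for i > n, and the index shift
   z_m ... z_{m+k} = z_m (z_{m+1} ... z_{m+k}).  Pascal's rule is obtained
   by splitting the subsets of {0,...,n} according to whether they contain
   the largest element n, the remaining part being a subset of {0,...,n-1}
   embedded by lift ord_max. *)

Lemma preimset_imset (aT rT : finType) (f : aT -> rT) (J : {set aT}) :
  injective f -> f @^-1: (f @: J) = J.
Proof. by move=> f_inj; apply/setP => j; rewrite inE mem_imset. Qed.

Section SubsetsOfOrdinal.

Variable n : nat.

Local Notation up := (@lift n.+1 ord_max).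

Lemma ord_max_notin_up (J : {set 'I_n}) : ord_max \notin up @: J.
Proof. by apply/imsetP => -[j _ /eqP]; apply/negP; apply: neq_lift. Qed.

Lemma imset_up_preimset (I : {set 'I_n.+1}) : up @: (up @^-1: I) = I :\ ord_max.
Proof.
apply/setP => i; rewrite !inE.
case: (unliftP ord_max i) => [j -> | ->]; last by rewrite (negPf (ord_max_notin_up _)) eqxx.
by rewrite eq_sym (negPf (neq_lift _ _)) mem_imset ?inE //; apply: lift_inj.
Qed.

Context {R : comPzRingType}.
Variable F : 'I_n.+1 -> R.

Lemma sum_subsets_without_max k :
  \sum_(I : {set 'I_n.+1} | (#|I| == k) && (ord_max \notin I)) \prod_(i in I) F i =
  \sum_(J : {set 'I_n} | #|J| == k) \prod_(j in J) F (up j).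
Proof.
rewrite (reindex_onto (fun J : {set 'I_n} => up @: J) (fun I => up @^-1: I)) /=; last first.
  move=> I /andP [_ maxNI]; rewrite imset_up_preimset.
  by apply/setP => i; rewrite !inE; case: eqP => // ->; rewrite (negPf maxNI).
apply: eq_big => [J | J _].
  by rewrite preimset_imset ?card_imset ?ord_max_notin_up ?eqxx ?andbT //; apply: lift_inj.
by rewrite big_imset //= => i j _ _; apply: lift_inj.
Qed.

Lemma sum_subsets_with_max k :
  \sum_(I : {set 'I_n.+1} | (#|I| == k.+1) && (ord_max \in I)) \prod_(i in I) F i =
  F ord_max * \sum_(J : {set 'I_n} | #|J| == k) \prod_(j in J) F (up j).
Proof.
rewrite mulr_sumr.
rewrite (reindex_onto (fun J : {set 'I_n} => ord_max |: up @: J) (fun I => up @^-1: I)) /=; last first.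
  by move=> I /andP [_ maxI]; rewrite imset_up_preimset setD1K.
have up_inj : injective up by apply: lift_inj.
apply: eq_big => [J | J _].
  have -> : up @^-1: (ord_max |: up @: J) = J.
    by apply/setP => j; rewrite !inE eq_sym (negPf (neq_lift _ _)) mem_imset.
  by rewrite cardsU1 ord_max_notin_up card_imset // setU11 eqxx !andbT.
by rewrite big_setU1 ?ord_max_notin_up //= big_imset // => i j _ _; apply: up_inj.
Qed.

End SubsetsOfOrdinal.

Section ElementarySymmetric.

Context {R : comPzRingType}.
Variable y : nat -> R.

Lemma elem_sym0 n : elem_sym n 0 y = 1.
Proof.
rewrite /elem_sym (big_pred1 set0) ?big_set0 // => I.
by rewrite /= cards_eq0.
Qed.

(* There are no subsets of {1,...,n} with more than n elements. *)
Lemma elem_sym_gt n i : (n < i)%N -> elem_sym n i y = 0.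
Proof.
move=> n_lt_i; rewrite /elem_sym big_pred0 // => I; apply/negbTE.
by rewrite neq_ltn (leq_trans _ n_lt_i) ?orbT // ltnS -[X in (_ <= X)%N]card_ord max_card.
Qed.

(* Pascal's rule: split according to whether y_{n+1} is used. *)
Lemma elem_symS n i :
  elem_sym n.+1 i.+1 y = elem_sym n i.+1 y + y n.+1 * elem_sym n i y.
Proof.
rewrite /elem_sym (bigID (fun I : {set 'I_n.+1} => ord_max \in I)) /= addrC.
rewrite sum_subsets_without_max sum_subsets_with_max.
by congr (_ + _ * _); apply: eq_bigr => I _; apply: eq_bigr => j _; rewrite lift_max.
Qed.

End ElementarySymmetric.

Lemma prod_nat_shift (R : comPzRingType) (z : nat -> R) m k :
  \prod_(m <= j < m + k.+1) z j = z m * \prod_(m.+1 <= j < m.+1 + k) z j.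
Proof. by rewrite addnS big_nat_recl ?leq_addr // big_add1 addSn. Qed.

Section ClosedForm.

Context {R : comPzRingType}.
Variables x y z : nat -> R.

Definition closed_form (n m : nat) : R :=
  \sum_(0 <= k < n.+1) x (m + k)%N * (\prod_(m <= j < m + k) z j) * elem_sym n (n - k) y.

Lemma closed_form0 m : closed_form 0 m = x m.
Proof. by rewrite /closed_form big_nat1 addn0 big_geq // elem_sym0 !mulr1. Qed.

Lemma closed_formS n m :
  closed_form n.+1 m = z m * closed_form n m.+1 + y n.+1 * closed_form n m.
Proof.
pose t k := x (m + k)%N * \prod_(m <= j < m + k) z j.
(* Pascal's rule splits each term with k <= n of closed_form n.+1 m into a
   term of closed_form n m (times y_{n+1}) and a remainder which, after the
   shift k -> k - 1, is a term of closed_form n m.+1 (times z_m); the k = 0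
   remainder vanishes and the k = n+1 term is the top remainder. *)
have pascal k : (k <= n)%N ->
    t k * elem_sym n.+1 (n.+1 - k) y =
    t k * elem_sym n (n.+1 - k) y + y n.+1 * (t k * elem_sym n (n - k) y).
  by move=> le_kn; rewrite subSn // elem_symS mulrDr mulrCA.
have shift k : t k.+1 * elem_sym n (n.+1 - k.+1) y =
    z m * (x (m.+1 + k)%N * (\prod_(m.+1 <= j < m.+1 + k) z j) * elem_sym n (n - k) y).
  by rewrite /t prod_nat_shift subSS addnS -addSn !mulrA (mulrC (x _)).
rewrite /closed_form big_nat_recr // subnn elem_sym0 /= big_nat_cond.
rewrite (eq_bigr (fun k => t k * elem_sym n (n.+1 - k) y
                       + y n.+1 * (t k * elem_sym n (n - k) y))); last first.
  by move=> k /andP [/andP [_ k_le_n] _]; apply: pascal.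
rewrite -big_nat_cond big_split !mulr_sumr /= addrAC; congr (_ + _).
have top : t n.+1 * 1 = t n.+1 * elem_sym n (n.+1 - n.+1) y by rewrite subnn elem_sym0.
rewrite [_ * 1]top -big_nat_recr // big_nat_recl // subn0 elem_sym_gt // mulr0 /= add0r.
by apply: eq_bigr => k _; apply: shift.
Qed.

End ClosedForm.

Theorem mainTheorem6 (R : comPzRingType) (x y z : nat -> R) (a : nat -> nat -> R)
  (a0 : forall m : nat, a 0%N m = x m)
  (aS : forall n m : nat, a n.+1 m = z m * a n m.+1 + y n.+1 * a n m) :
  forall n m : nat,
    a n m = \sum_(0 <= k < n.+1)
              x (m + k)%N * (\prod_(m <= j < m + k) z j) * elem_sym n (n - k) y.
Proof.
have agree n : forall m, a n m = closed_form x y z n m.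
  elim: n => [|n IH] m; first by rewrite a0 closed_form0.
  by rewrite aS closed_formS !IH.
exact: agree.
Qed.
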